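(* Let $m\geq 4$ be an integer and let $G$ be an $m$-free digraph with at least one vertex. Define, for $v\in V(G)$ and $1\leq k\leq m-3$, $\alpha_k(v)=p_k(v)/s_k(v)$ and $\beta_k(v)=r'_k(v)/t_k(v)$ (with the conventions $a/0=+\infty$ for $a>0$ and $0/0=0$), and let $\alpha=\min_{v\in V(G),\,1\leq k\leq m-3}\alpha_k(v)$ and $\beta=\min_{v\in V(G),\,1\leq k\leq m-3}\beta_k(v)$. Then $\min\{\alpha,\beta\}\leq \frac{1}{m-2}$.
   Context: All digraphs are finite, without loops and without parallel edges. A digraph is $m$-free if it has no directed cycle of length at most $m$. For a vertex $v$ and $i\geq 0$, $N_i^+(v)$ is the set of vertices $u$ such that the shortest directed path from $v$ to $u$ has length exactly $i$. A directed path $(v_0,\dots,v_k)$ consists of distinct vertices with $(v_i,v_{i+1})$ an edge for each $i$; its length is $k$. It is induced if every edge of $G$ with both ends in $\{v_0,\dots,v_k\}$ is one of the edges $(v_i,v_{i+1})$; it is a shortest induced directed path if it is induced and $v_k\in N_k^+(v_0)$. Let $\mathscr{P}(G)$ be the set of shortest induced directed paths of $G$. For an integer $k\geq1$ and $v\in V(G)$: $P_k(v)$ (resp. $Q_k(v)$, $R_k(v)$) is the set of triples $(x,y,z)$ of vertices for which there exist vertices $w_1,\dots,w_k$ with $(x,w_1,\dots,w_k,y,z)\in\mathscr{P}(G)$ and $x=v$ (resp. $y=v$, $z=v$). $P'_k(v)$ (resp. $Q'_k(v)$, $R'_k(v)$) is the set of triples $(x,y,z)$ for which there exist $w_1,\dots,w_k$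 with $(x,y,w_1,\dots,w_k,z)\in\mathscr{P}(G)$ and $x=v$ (resp. $y=v$, $z=v$). Lowercase letters denote cardinalities: $p_k(v)=|P_k(v)|$, etc. For $1\leq k\leq m-3$: $s_k(v)=\sum_{i=k}^{m-3}p'_i(v)+\sum_{i=1}^{k}q'_i(v)$ and $t_k(v)=\sum_{i=k}^{m-3}r_i(v)+\sum_{i=1}^{k}q_i(v)$. *)

From HB Require Import structures.
From mathcomp Require Import all_boot all_order all_algebra.
Set Implicit Arguments. Unset Strict Implicit. Unset Printing Implicit Defensive.
Import Order.TTheory GRing.Theory Num.Theory.

(* A digraph is a finite type V with an edge relation E : rel V
   (no parallel edges by construction; loops excluded by hypothesis
   in the theorem). *)

Section Digraph.
Variables (V : finType) (E : rel V).

(* m-free: no directed cycle of length at most m.  A directed cycle of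
   length k is a duplicate-free sequence [x_0; ...; x_{k-1}] with edges
   x_i -> x_{i+1} and x_{k-1} -> x_0 (MathComp's [cycle]). *)
Definition mfree (m : nat) : Prop :=
  forall c : seq V, uniq c -> 0 < size c <= m -> ~~ cycle E c.

Fixpoint ball (v : V) (i : nat) : {set V} :=
  match i with
  | 0 => [set v]
  | i'.+1 => ball v i' :|: [set u | [exists w in ball v i', E w u]]
  end.

(* u \in N_i^+(v): the shortest directed path from v to u has length i. *)
Definition inN (v : V) (i : nat) (u : V) : bool :=
  match i with
  | 0 => u == v
  | i'.+1 => (u \in ball v i) && (u \notin ball v i')
  end.

(* s = (v_0, ..., v_k) is a shortest induced directed path. *)
Definition sip (s : seq V) : bool :=
  match s with
  | [::] => false
  | x :: t =>
      [&& uniq s, path E x t,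
          [forall i : 'I_(size s), forall j : 'I_(size s),
             E (nth x s i) (nth x s j) ==> (j == i.+1 :> nat)]
        & inN x (size t) (last x t)]
  end.

Definition triple := (V * V * V)%type.

Definition sipA (k : nat) (t : triple) : bool :=
  let: (x, y, z) := t in [exists w : k.-tuple V, sip (x :: w ++ [:: y; z])].
Definition sipB (k : nat) (t : triple) : bool :=
  let: (x, y, z) := t in [exists w : k.-tuple V, sip (x :: y :: w ++ [:: z])].

Definition P_ k v : {set triple} := [set t | (t.1.1 == v) && sipA k t].
Definition Q_ k v : {set triple} := [set t | (t.1.2 == v) && sipA k t].
Definition R_ k v : {set triple} := [set t | (t.2 == v) && sipA k t].
Definition P'_ k v : {set triple} := [set t | (t.1.1 == v) && sipB k t].
Definition Q'_ k v : {set triple} := [set t | (t.1.2 == v) && sipB k t].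
Definition R'_ k v : {set triple} := [set t | (t.2 == v) && sipB k t].

Definition p k v := #|P_ k v|.
Definition q k v := #|Q_ k v|.
Definition r k v := #|R_ k v|.
Definition p' k v := #|P'_ k v|.
Definition q' k v := #|Q'_ k v|.
Definition r' k v := #|R'_ k v|.

Definition s_ (m k : nat) (v : V) : nat :=
  (\sum_(k <= i < m - 2) p' i v + \sum_(1 <= i < k.+1) q' i v)%N.
Definition t_ (m k : nat) (v : V) : nat :=
  (\sum_(k <= i < m - 2) r i v + \sum_(1 <= i < k.+1) q i v)%N.

End Digraph.

(* Extended nonnegative rationals: Some x = x, None = +infinity. *)
Definition xrat := option rat.

Definition xdiv (a b : nat) : xrat :=
  if b == 0%N then (if a == 0%N then Some 0%R else None)
  else Some (a%:R / b%:R)%R.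

Definition xmin (x y : xrat) : xrat :=
  match x, y with
  | None, _ => y
  | _, None => x
  | Some a, Some b => Some (Num.min a b)
  end.

Definition xle (x y : xrat) : bool :=
  match x, y with
  | _, None => true
  | None, Some _ => false
  | Some a, Some b => (a <= b)%R
  end.

Definition alpha_ (V : finType) (E : rel V) m k v : xrat := xdiv (p E k v) (s_ E m k v).
Definition beta_ (V : finType) (E : rel V) m k v : xrat := xdiv (r' E k v) (t_ E m k v).

Definition alpha (V : finType) (E : rel V) m : xrat :=
  \big[xmin/None]_(v : V) \big[xmin/None]_(1 <= k < m - 2) alpha_ E m k v.
Definition beta (V : finType) (E : rel V) m : xrat :=
  \big[xmin/None]_(v : V) \big[xmin/None]_(1 <= k < m - 2) beta_ E m k v.

From HB Require Import structures.
From mathcomp Require Import all_boot all_order all_algebra.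
From mathcomp Require Import zify.
Import Order.TTheory GRing.Theory Num.Theory.

(* Proof idea: a double counting argument.  Write N = m - 2 and let A_i
   (resp. B_i) be the number of triples (x, y, z) that occur as the
   endpoints/second-to-last vertex (resp. endpoints/second vertex) of a
   shortest induced path with i interior vertices of the corresponding
   shape.  Every such triple has exactly one first, second and last vertex,
   so summing p_i, q_i, r_i over all vertices gives A_i and summing
   p'_i, q'_i, r'_i gives B_i.  Hence
     sum_v s_k(v) = sum_(1<=i<N) B_i + B_k,   sum_v t_k(v) = sum_(1<=i<N) A_i + A_k.
   If the theorem failed, every alpha_k(v) and beta_k(v) would exceed 1/N,
   i.e. s_k(v) < N p_k(v) and t_k(v) < N r'_k(v) for all v and k; summing
   over the (nonempty) vertex set and then over k yields both
   N * sum B < N * sum A and N * sum A < N * sum B, a contradiction. *)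

Lemma xle_xminl (a b : xrat) (c : rat) :
  xle a (Some c) -> xle (xmin a b) (Some c).
Proof. by case: a => [x|] //= Hx; case: b => [y|] //=; rewrite ge_min Hx. Qed.

Lemma xle_xminr (a b : xrat) (c : rat) :
  xle b (Some c) -> xle (xmin a b) (Some c).
Proof. by case: b => [y|] //= Hy; case: a => [x|] //=; rewrite ge_min Hy orbT. Qed.

Lemma xle_bigmin (I : eqType) (r : seq I) (F : I -> xrat) (x : I) (c : rat) :
  x \in r -> xle (F x) (Some c) -> xle (\big[xmin/None]_(i <- r) F i) (Some c).
Proof.
elim: r => [|a r IH] //; rewrite big_cons in_cons => /orP [/eqP <-|Hx] HF.
- exact: xle_xminl.
- exact/xle_xminr/IH.
Qed.

Lemma xle_bigmin2 (V : finType) (F : nat -> V -> xrat) (n k : nat) (v : V)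
    (c : rat) :
  1 <= k < n -> xle (F k v) (Some c) ->
  xle (\big[xmin/None]_(u : V) \big[xmin/None]_(1 <= i < n) F i u) (Some c).
Proof.
move=> Hk HF; apply: (@xle_bigmin _ _ _ v); first by rewrite mem_index_enum.
by apply: (@xle_bigmin _ _ _ k); rewrite ?mem_index_iota.
Qed.

Lemma xdiv_le (N a b : nat) :
  0 < N -> N * a <= b -> xle (xdiv a b) (Some (1 / N%:R)%R).
Proof.
move=> HN Hab; rewrite /xdiv; case: eqP => [Hb|/eqP Hb].
  have -> : a = 0 by move: Hab; rewrite Hb; nia.
  by rewrite /= divr_ge0 ?ler0n.
rewrite /= ler_pdivrMr ?ltr0n ?lt0n // mul1r mulrC ler_pdivlMr ?ltr0n //.
by rewrite -natrM ler_nat mulnC.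
Qed.

Lemma ltn_sum_nat (a b : nat) (F G : nat -> nat) :
  a < b -> (forall i, a <= i < b -> F i < G i) ->
  \sum_(a <= i < b) F i < \sum_(a <= i < b) G i.
Proof.
move=> Hab HFG; rewrite !(big_ltn Hab).
have Hrest : \sum_(a.+1 <= i < b) F i <= \sum_(a.+1 <= i < b) G i.
  rewrite big_nat_cond [leqRHS]big_nat_cond.
  by apply: leq_sum => i /andP [/andP [Hai Hib] _]; apply/ltnW/HFG; lia.
by rewrite -addSn; apply: leq_add Hrest; apply: HFG; rewrite leqnn.
Qed.

Lemma ltn_sum_fin (V : finType) (F G : V -> nat) :
  0 < #|V| -> (forall v, F v < G v) -> \sum_(v : V) F v < \sum_(v : V) G v.
Proof.
case/card_gt0P => v0 _ HFG; rewrite (bigD1 v0) // [ltnRHS](bigD1 v0) //=.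
by rewrite -addSn; apply: leq_add; [apply: HFG | apply: leq_sum => v _; apply/ltnW/HFG].
Qed.

Lemma sum_split_overlap (T : nat -> nat) (N k : nat) : 1 <= k < N ->
  \sum_(k <= i < N) T i + \sum_(1 <= i < k.+1) T i =
  \sum_(1 <= i < N) T i + T k.
Proof.
case/andP=> Hk1 HkN.
rewrite (big_nat_recr k 1) // (@big_cat_nat _ _ _ k 1 N) //=; lia.
Qed.

(* Summing the first family of inequalities over k
   gives N * sum B < N * sum A, the second gives the reverse. *)
Lemma no_mutual_domination (A B : nat -> nat) (N : nat) : 1 < N ->
  ~ (forall k, 1 <= k < N ->
       \sum_(1 <= i < N) B i + B k < N * A k /\
       \sum_(1 <= i < N) A i + A k < N * B k).
Proof.
move=> HN H.
have SA := @ltn_sum_nat _ _ _ _ HN (fun k Hk => proj1 (H k Hk)).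
have SB := @ltn_sum_nat _ _ _ _ HN (fun k Hk => proj2 (H k Hk)).
rewrite -!big_distrr /= !big_split /= !sum_nat_const_nat in SA SB; lia.
Qed.

Lemma sum_card_fibres (V T : finType) (f : T -> V) (P : pred T) :
  \sum_(v : V) #|[set t | (f t == v) && P t]| = #|[set t | P t]|.
Proof.
rewrite -sum1_card (partition_big f predT) //=.
by apply: eq_bigr => v _; rewrite -sum1_card; apply: eq_bigl => t; rewrite !inE andbC.
Qed.

Section VertexSums.
Variables (V : finType) (E : rel V).

Definition countA (i : nat) : nat := #|[set t | sipA E i t]|.
Definition countB (i : nat) : nat := #|[set t | sipB E i t]|.

(* Each triple has one first, one middle and one last vertex, so summing
   any of the six vertex counts over V recovers the total count. *)
Lemma sum_p k : \sum_v p E k v = countA k.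
Proof. exact: (@sum_card_fibres _ _ (fun t : triple V => t.1.1)). Qed.
Lemma sum_q k : \sum_v q E k v = countA k.
Proof. exact: (@sum_card_fibres _ _ (fun t : triple V => t.1.2)). Qed.
Lemma sum_r k : \sum_v r E k v = countA k.
Proof. exact: (@sum_card_fibres _ _ (fun t : triple V => t.2)). Qed.
Lemma sum_p' k : \sum_v p' E k v = countB k.
Proof. exact: (@sum_card_fibres _ _ (fun t : triple V => t.1.1)). Qed.
Lemma sum_q' k : \sum_v q' E k v = countB k.
Proof. exact: (@sum_card_fibres _ _ (fun t : triple V => t.1.2)). Qed.
Lemma sum_r' k : \sum_v r' E k v = countB k.
Proof. exact: (@sum_card_fibres _ _ (fun t : triple V => t.2)). Qed.

Lemma sum_s m k : 1 <= k < m - 2 ->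
  \sum_v s_ E m k v = \sum_(1 <= i < m - 2) countB i + countB k.
Proof.
move=> Hk; rewrite -sum_split_overlap // /s_ big_split /=.
by congr (_ + _); rewrite exchange_big; apply: eq_bigr => i _;
  rewrite ?sum_p' ?sum_q'.
Qed.

Lemma sum_t m k : 1 <= k < m - 2 ->
  \sum_v t_ E m k v = \sum_(1 <= i < m - 2) countA i + countA k.
Proof.
move=> Hk; rewrite -sum_split_overlap // /t_ big_split /=.
by congr (_ + _); rewrite exchange_big; apply: eq_bigr => i _;
  rewrite ?sum_r ?sum_q.
Qed.

Lemma not_all_dominated m : 4 <= m -> 0 < #|V| ->
  ~ (forall v k, 1 <= k < m - 2 ->
       s_ E m k v < (m - 2) * p E k v /\ t_ E m k v < (m - 2) * r' E k v).
Proof.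
move=> Hm HV H; apply: (@no_mutual_domination countA countB (m - 2)).
  by lia.
move=> k Hk; rewrite -sum_s // -sum_t // -sum_p -sum_r' !big_distrr /=.
by split; apply: ltn_sum_fin => // v; case: (H v k Hk).
Qed.

End VertexSums.

Theorem lemma2p5 (V : finType) (E : rel V) (m : nat)
  (Hm : 4 <= m) (Hloop : forall x : V, ~~ E x x) (Hfree : mfree E m)
  (HV : 0 < #|V|) :
  xle (xmin (alpha E m) (beta E m)) (Some (1 / (m - 2)%:R)%R).
Proof.
have HN : 0 < m - 2 by lia.
apply/negPn/negP => /negP Hgt; apply: (@not_all_dominated V E m Hm HV) => v k Hk.
split; rewrite ltnNge; apply/negP => Hle; apply: Hgt.
- by apply/xle_xminl/(@xle_bigmin2 _ _ _ _ v _ Hk)/xdiv_le.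
- by apply/xle_xminr/(@xle_bigmin2 _ _ _ _ v _ Hk)/xdiv_le.
Qed.
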